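(* Let $G=*_C G_i$ be an amalgamated free product, $n\ge1$, and $t_1,\dots,t_n,g_1,\dots,g_n\in G$. If the tuple $((t_1,g_1),\dots,(t_n,g_n))$ is tamed, then $$l(t_1^{g_1}t_2^{g_2}\cdots t_n^{g_n})\ge l(g_1)+n+l(g_n).$$
   Context: Notation $x^y=y^{-1}xy$. Every $g\in G=*_C G_i$ can be written $g=cx_1\cdots x_n$ with $c\in C$, $x_j\in G_{i_j}\setminus C$ and $i_j\neq i_{j+1}$; $n$ is determined by $g$ and called the length $l(g)$ (so $l(g)=0$ iff $g\in C$). A product $h_1\cdots h_k$ (i.e. the tuple $(h_1,\dots,h_k)$) is reduced if $l(h_1\cdots h_k)=l(h_1)+\cdots+l(h_k)$. If $h=h'h''$ with the product $h'h''$ reduced, $h'$ is a left factor and $h''$ a right factor of $h$. Set $g_0=g_{n+1}=t_0=t_{n+1}=1$. For $1\le i\le n$, $t_i$ is cancellable if at least one of: (1) $R g_i^{-1}t_i\in C$ for some right factor $R$ of $g_{i-1}$; (2) $t_ig_iL\in C$ for some left factor $L$ of $g_{i+1}^{-1}$; (3) $R\,g_i^{-1}t_ig_i\,L\in C$ for some right factor $R$ of $g_{i-1}$ and some left factor $L$ of $g_{i+1}^{-1}$. The tuple $((t_1,g_1),\dots,(t_n,g_n))$ is tamed if: (a) for each $i$, $l(t_i)=1$ and the product $g_i^{-1}t_ig_i$ (tuple $(g_i^{-1},t_i,g_i)$) is reduced; (b) for $1\le i\le n-1$, if $l(g_ig_{i+1}^{-1})=0$ then $l(t_it_{i+1})=2$;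 (c) no $t_i$ is cancellable. *)

From Stdlib Require Import List Arith Lia ClassicalEpsilon.
Import ListNotations.
Set Implicit Arguments.

Record Grp := {
  car :> Type;
  gmul : car -> car -> car;
  ginv : car -> car;
  gone : car;
  gmulA : forall x y z, gmul x (gmul y z) = gmul (gmul x y) z;
  gmul1 : forall x, gmul gone x = x;
  gmulV : forall x, gmul (ginv x) x = gone }.

Section AFP.
Variable G : Grp.
Variable I : Type.
Variable Gi : I -> G -> Prop.
Variable C : G -> Prop.

Local Notation "x * y" := (gmul G x y).
Local Notation e := (gone G).

Definition is_subgroup (H : G -> Prop) : Prop :=
  H e /\ (forall x y, H x -> H y -> H (x * y)) /\ (forall x, H x -> H (ginv G x)).

Definition gprod (xs : list G) : G := fold_left (fun a x => a * x) xs e.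

Definition gconj (x y : G) : G := ginv G y * x * y.

Fixpoint alternating (ws : list (I * G)) : Prop :=
  match ws with
  | [] => True
  | (i, x) :: rest =>
      Gi i x /\ ~ C x /\
      (match rest with [] => True | (j, _) :: _ => i <> j end) /\
      alternating rest
  end.

(* G = *_C G_i : G_i subgroups containing the subgroup C, G generated by the
   G_i, and (normal form theorem) no alternating product of length >= 1 is 1. *)
Definition is_amalgamated_free_product : Prop :=
  is_subgroup C /\ (forall i, is_subgroup (Gi i)) /\
  (forall i x, C x -> Gi i x) /\
  (forall g : G, exists ws : list (I * G),
      (forall w, In w ws -> Gi (fst w) (snd w)) /\ g = gprod (map snd ws)) /\
  (forall ws : list (I * G), ws <> [] -> alternating ws -> gprod (map snd ws) <> e).

Definition has_length (g : G) (n : nat) : Prop :=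
  exists (c : G) (ws : list (I * G)),
    C c /\ alternating ws /\ length ws = n /\ g = c * gprod (map snd ws).

(* l(g): the (well-defined) n of any such expression of g *)
Definition len (g : G) : nat := epsilon (inhabits 0) (has_length g).

Definition reduced (hs : list G) : Prop :=
  len (gprod hs) = fold_right (fun h s => len h + s) 0 hs.

Definition left_factor (h' h : G) : Prop :=
  exists h'', h = h' * h'' /\ reduced [h'; h''].
Definition right_factor (h'' h : G) : Prop :=
  exists h', h = h' * h'' /\ reduced [h'; h''].

(* t, g : nat -> G are indexed by 1..n; g_0 = g_{n+1} = 1 *)
Definition ext (n : nat) (f : nat -> G) (i : nat) : G :=
  if orb (i =? 0) (i =? S n) then e else f i.

Definition cancellable (n : nat) (t g : nat -> G) (i : nat) : Prop :=
  let gi := ext n g i in let ti := ext n t i in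
  (exists R, right_factor R (ext n g (i - 1)) /\ C (R * ginv G gi * ti)) \/
  (exists L, left_factor L (ginv G (ext n g (i + 1))) /\ C (ti * gi * L)) \/
  (exists R L, right_factor R (ext n g (i - 1)) /\
               left_factor L (ginv G (ext n g (i + 1))) /\
               C (R * ginv G gi * ti * gi * L)).

Definition tamed (n : nat) (t g : nat -> G) : Prop :=
  (forall i, 1 <= i <= n -> len (t i) = 1 /\ reduced [ginv G (g i); t i; g i]) /\
  (forall i, 1 <= i <= n - 1 -> len (g i * ginv G (g (i + 1))) = 0 ->
             len (t i * t (i + 1)) = 2) /\
  (forall i, 1 <= i <= n -> ~ cancellable n t g i).

Definition conj_prod (n : nat) (t g : nat -> G) : G :=
  gprod (map (fun i => gconj (t i) (g i)) (seq 1 n)).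

End AFP.

(* Follow the partial products [P_k = t_1^(g_1) ... t_k^(g_k)] in normal form
   [P_k = c Q y Z], where [Z] is a normal word of [g_k], the letter [y] comes from
   [t_k], and [|Q| + 1 >= l(g_1) + k].  In [P_(k+1) = P_k g_(k+1)^-1 t_(k+1) g_(k+1)]
   the word [Z] cancels as far as possible against the inverted normal word of
   [g_(k+1)], whose first letter is not in the factor of [t_(k+1)] because
   [g_(k+1)^-1 t_(k+1) g_(k+1)] is reduced.  Tameness guarantees that no letter is
   lost at the junction: if all of [Z] cancels, the cancellation stops at [y] (else
   [t_k] would be cancellable, or [l(t_k t_(k+1)) < 2] when [g_k g_(k+1)^-1] lies in
   [C]); if all of [g_(k+1)^-1] cancels, the last surviving letter of [g_k] does not
   swallow [t_(k+1)] (else [t_(k+1)] would be cancellable).  So [Q] grows at every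
   step, and at [k = n] the word [Z] has length [l(g_n)]. *)

From Pilot Require Import Defs.
From Stdlib Require Import List Arith Lia Classical ClassicalEpsilon.
Import ListNotations.

Section GroupLaws.
Context {G : Grp}.
Local Notation "x * y" := (gmul G x y).
Local Notation one := (gone G).
Local Notation inv := (ginv G).

Lemma mulgV x : x * inv x = one.
Proof.
  rewrite <- (gmul1 G (x * inv x)), <- (gmulV G (inv x)) at 1.
  rewrite <- gmulA, (gmulA G (inv x)), gmulV, gmul1. apply gmulV.
Qed.

Lemma mulg1 x : x * one = x.
Proof. rewrite <- (gmulV G x), gmulA, mulgV. apply gmul1. Qed.

Lemma inv_unique a b : a * b = one -> a = inv b.
Proof. intro H. rewrite <- (mulg1 a), <- (mulgV b), gmulA, H. apply gmul1. Qed.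

Lemma invMg x y : inv (x * y) = inv y * inv x.
Proof.
  symmetry. apply inv_unique.
  rewrite gmulA, <- (gmulA G (inv y)), gmulV, mulg1. apply gmulV.
Qed.

Lemma invgK x : inv (inv x) = x.
Proof. symmetry. apply inv_unique. apply mulgV. Qed.

Lemma invg1 : inv one = one.
Proof. symmetry. apply inv_unique. apply gmul1. Qed.

Lemma mulgK a x : a * x * inv x = a.
Proof. rewrite <- gmulA, mulgV. apply mulg1. Qed.

Lemma mulgKV a x : a * inv x * x = a.
Proof. rewrite <- gmulA, gmulV. apply mulg1. Qed.

Lemma gprod_fold xs a : fold_left (fun a x => a * x) xs a = a * gprod G xs.
Proof.
  revert a; induction xs as [|x xs IH]; intro a; unfold gprod; simpl.
  - now rewrite mulg1.
  - rewrite IH, (IH (one * x)), gmul1, gmulA. reflexivity.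
Qed.

Lemma gprod_cons x xs : gprod G (x :: xs) = x * gprod G xs.
Proof. unfold gprod at 1; simpl. rewrite gprod_fold, gmul1. reflexivity. Qed.

Lemma gprod_app xs ys : gprod G (xs ++ ys) = gprod G xs * gprod G ys.
Proof. unfold gprod at 1. rewrite fold_left_app, gprod_fold. reflexivity. Qed.

Lemma conj_prod_S k t g :
  conj_prod G (S k) t g = conj_prod G k t g * gconj G (t (S k)) (g (S k)).
Proof.
  unfold conj_prod. rewrite seq_S, map_app, gprod_app; simpl.
  rewrite gprod_cons. unfold gprod at 2; simpl. now rewrite mulg1.
Qed.

Lemma ext_in n f i : 1 <= i <= n -> ext G n f i = f i.
Proof.
  intro Hi. unfold ext.
  replace (i =? 0) with false by (symmetry; apply Nat.eqb_neq; lia).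
  replace (i =? S n) with false by (symmetry; apply Nat.eqb_neq; lia).
  reflexivity.
Qed.

End GroupLaws.

Ltac group_simpl :=
  repeat rewrite ?invMg, ?invgK, ?invg1, ?gmulA, ?mulgK, ?mulgKV, ?mulgV, ?gmulV,
    ?gmul1, ?mulg1.

Section Words.
Variables (G : Grp) (I : Type) (Gi : I -> G -> Prop) (C : G -> Prop).
Hypothesis AFP : is_amalgamated_free_product G Gi C.

Local Notation "x * y" := (gmul G x y).
Local Notation one := (gone G).
Local Notation inv := (ginv G).
Local Notation word := (list (I * G)).
Local Notation alt := (alternating G Gi C).
Local Notation len := (len G Gi C).

Lemma C1 : C one. Proof. apply AFP. Qed.
Lemma CM x y : C x -> C y -> C (x * y). Proof. apply AFP. Qed.
Lemma CV x : C x -> C (inv x). Proof. apply AFP. Qed.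
Lemma GM i x y : Gi i x -> Gi i y -> Gi i (x * y). Proof. apply AFP. Qed.
Lemma GV i x : Gi i x -> Gi i (inv x). Proof. apply AFP. Qed.
Lemma CG i x : C x -> Gi i x. Proof. apply AFP. Qed.

Lemma CVr x : C (inv x) -> C x.
Proof. rewrite <- (invgK x) at 2. apply CV. Qed.

Lemma CMr x y : C (x * y) -> C y -> C x.
Proof. intros Hxy Hy. rewrite <- (mulgK x y). apply CM; [exact Hxy | now apply CV]. Qed.

Lemma CMl x y : C (x * y) -> C x -> C y.
Proof.
  intros Hxy Hx. rewrite <- (gmul1 G y), <- (gmulV G x), <- gmulA.
  apply CM; [now apply CV | exact Hxy].
Qed.

(* A letter [(i, x)] records the factor [G_i] containing [x]; with [alternating u],
   [c * wprod u] is a normal form [c x_1 ... x_n]. *)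
Definition wprod (u : word) : G := gprod G (map snd u).
Definition winv (u : word) : word := rev (map (fun a => (fst a, inv (snd a))) u).
Definition letter (a : I * G) : Prop := Gi (fst a) (snd a) /\ ~ C (snd a).
Definition head_not (u : word) (i : I) : Prop := forall a v, u = a :: v -> fst a <> i.
Definition last_not (u : word) (i : I) : Prop := forall v a, u = v ++ [a] -> fst a <> i.

Lemma wprod_nil : wprod [] = one.
Proof. reflexivity. Qed.

Lemma wprod_cons a u : wprod (a :: u) = snd a * wprod u.
Proof. apply gprod_cons. Qed.

Lemma wprod_app u v : wprod (u ++ v) = wprod u * wprod v.
Proof. unfold wprod. rewrite map_app. apply gprod_app. Qed.

Lemma wprod1 a : wprod [a] = snd a.
Proof. rewrite wprod_cons. apply mulg1. Qed.

Ltac wprod_simpl := repeat rewrite ?wprod_app, ?wprod_cons, ?wprod_nil; cbn [fst snd].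

Lemma winv_cons a u : winv (a :: u) = winv u ++ [(fst a, inv (snd a))].
Proof. reflexivity. Qed.

Lemma length_winv u : length (winv u) = length u.
Proof. unfold winv. now rewrite length_rev, length_map. Qed.

Lemma wprod_winv u : wprod (winv u) = inv (wprod u).
Proof.
  induction u as [|a u IH]; [symmetry; apply invg1|].
  rewrite winv_cons, wprod_app, IH, wprod1, wprod_cons, invMg. reflexivity.
Qed.

Lemma letter_mulC_r i x z : letter (i, x) -> C z -> letter (i, x * z).
Proof.
  intros [Hx HxC] Hz. split; simpl; [apply GM; auto; now apply CG|].
  intro H. apply HxC. now apply (CMr x z).
Qed.

Lemma letter_mulC_l i x z : letter (i, x) -> C z -> letter (i, z * x).
Proof.
  intros [Hx HxC] Hz. split; simpl; [apply GM; auto; now apply CG|].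
  intro H. apply HxC. now apply (CMl z x).
Qed.

Lemma letter_inv i x : letter (i, x) -> letter (i, inv x).
Proof. intros [Hx HxC]. split; simpl; [now apply GV | intro H; now apply HxC, CVr]. Qed.

Lemma letter_conjC i x z : letter (i, x) -> C z -> letter (i, inv z * x * z).
Proof. intros Hx Hz. apply letter_mulC_r; [apply letter_mulC_l|]; auto using CV. Qed.

Lemma head_not_cons a u i : head_not (a :: u) i <-> fst a <> i.
Proof. split; [intro H; now apply (H a u) | intros H b v E; now inversion E; subst]. Qed.

Lemma last_not_nil i : last_not [] i.
Proof. intros v a E. now destruct v. Qed.

Lemma last_not_snoc u a i : last_not (u ++ [a]) i <-> fst a <> i.
Proof.
  split; [intro H; now apply (H u a)|].
  intros H v b E. apply app_inj_tail in E. now destruct E as [_ <-].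
Qed.

Lemma head_not_nil i : head_not [] i.
Proof. intros a v E. discriminate. Qed.

Lemma last_not1 a i : last_not [a] i <-> fst a <> i.
Proof. exact (last_not_snoc [] a i). Qed.

Lemma last_not_cons a b u i : last_not (a :: b :: u) i <-> last_not (b :: u) i.
Proof.
  destruct (exists_last (l := b :: u) ltac:(discriminate)) as (v & c & E).
  rewrite E. change (a :: v ++ [c]) with ((a :: v) ++ [c]). now rewrite !last_not_snoc.
Qed.

Lemma last_not_suffix u v i : last_not (u ++ v) i -> last_not v i.
Proof. intros H v' a ->. apply (H (u ++ v')). now rewrite app_assoc. Qed.

Lemma last_not_winv u i : head_not u i -> last_not (winv u) i.
Proof.
  destruct u as [|a u]; [intros _; apply last_not_nil|].
  rewrite head_not_cons, winv_cons, last_not_snoc. auto.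
Qed.

Lemma alt_cons a u : alt (a :: u) <-> letter a /\ head_not u (fst a) /\ alt u.
Proof.
  destruct a as [i x], u as [|[j y] u]; unfold letter; simpl;
    rewrite ?head_not_cons; simpl; pose proof (head_not_nil i); intuition.
Qed.

Lemma alt_cat_cons L a W :
  alt (L ++ a :: W) <->
  alt L /\ last_not L (fst a) /\ letter a /\ alt W /\ head_not W (fst a).
Proof.
  induction L as [|b L IH]; cbn [app].
  - rewrite alt_cons. pose proof (last_not_nil (fst a)). simpl. tauto.
  - rewrite !alt_cons, IH. destruct L as [|c L]; cbn [app].
    + rewrite head_not_cons, last_not1.
      pose proof (head_not_nil (fst b)). pose proof (last_not_nil (fst a)).
      simpl. intuition congruence.
    + rewrite !head_not_cons, last_not_cons. tauto.
Qed.

Lemma alt_snoc L a : alt (L ++ [a]) <-> alt L /\ last_not L (fst a) /\ letter a.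
Proof. rewrite alt_cat_cons. pose proof (head_not_nil (fst a)). simpl. tauto. Qed.

Lemma alt1 a : alt [a] <-> letter a.
Proof. rewrite alt_cons. pose proof (head_not_nil (fst a)). simpl. tauto. Qed.

Lemma alt_app u v : alt (u ++ v) -> alt u /\ alt v.
Proof.
  destruct v as [|a v]; [rewrite app_nil_r; split; [auto | constructor]|].
  rewrite alt_cat_cons, alt_cons. tauto.
Qed.

Lemma alt_letter u a : alt u -> In a u -> letter a.
Proof.
  intros Hu Ha. apply in_split in Ha as (v & w & ->). apply alt_cat_cons in Hu. tauto.
Qed.

Lemma alt_replace u a a' v :
  alt (u ++ a :: v) -> letter a' -> fst a' = fst a -> alt (u ++ a' :: v).
Proof. rewrite !alt_cat_cons. intros H Ha' ->. tauto. Qed.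

Lemma alt_winv u : alt u -> alt (winv u).
Proof.
  induction u as [|[i x] u IH]; [auto|].
  rewrite alt_cons, winv_cons, alt_snoc. intros (Hx & Hh & Hu). simpl.
  split; [auto|]. split; [now apply last_not_winv | now apply letter_inv].
Qed.

Lemma alt_join_distinct A a c T :
  C c -> alt (A ++ [a]) -> alt T -> head_not T (fst a) ->
  alt (A ++ (fst a, snd a * c) :: T).
Proof.
  rewrite alt_snoc, alt_cat_cons. destruct a as [i x]; simpl.
  intros Hc (HA & HAa & Ha) HT HTa. repeat split; auto; now apply letter_mulC_r.
Qed.

Lemma alt_join_merge A a b B c :
  C c -> alt (A ++ [a]) -> alt (b :: B) -> fst b = fst a -> ~ C (snd a * c * snd b) ->
  alt (A ++ (fst a, snd a * c * snd b) :: B).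
Proof.
  rewrite alt_snoc, alt_cat_cons, alt_cons. destruct a as [i x], b as [i' y]; simpl.
  intros Hc (HA & HAa & [Hx _]) ([Hy _] & HB & HBb) -> Hm. simpl in HB.
  repeat split; auto. apply GM; [apply GM|]; auto. now apply CG.
Qed.

Lemma nf_mulC c u z : C c -> alt u -> C z ->
  exists c' u', C c' /\ alt u' /\ length u' = length u /\ c * wprod u * z = c' * wprod u'.
Proof.
  intros Hc Hu Hz. destruct u as [|[i x] u _] using rev_ind.
  - exists (c * z), []. repeat split; [now apply CM |].
    rewrite wprod_nil. now group_simpl.
  - exists c, (u ++ [(i, x * z)]). rewrite alt_snoc in *. rewrite !length_app.
    destruct Hu as (Hu & Hux & Hx). split; [auto|]. split; [|split; [auto|]].
    + split; [auto|]. split; [auto | now apply letter_mulC_r].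
    + rewrite !wprod_app, !wprod1. simpl. now group_simpl.
Qed.

Lemma nf_neq1 c u : C c -> alt u -> u <> [] -> c * wprod u <> one.
Proof.
  intros Hc Hu Hne. destruct u as [|[i x] u]; [congruence|].
  destruct AFP as (_ & _ & _ & _ & Hfree).
  assert (Hcu : alt ((i, c * x) :: u)).
  { apply (alt_replace [] (i, x)); auto. apply letter_mulC_l; auto. apply alt_cons in Hu; tauto. }
  intro E. apply (Hfree ((i, c * x) :: u) ltac:(discriminate) Hcu). fold (wprod ((i, c * x) :: u)).
  rewrite wprod_cons in *. simpl in *. rewrite <- E. now group_simpl.
Qed.

Lemma nf_mul_elem c u i x : C c -> alt u -> Gi i x ->
  exists c' u', C c' /\ alt u' /\ length u' <= S (length u) /\ c * wprod u * x = c' * wprod u'.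
Proof.
  intros Hc Hu Hx. destruct (classic (C x)) as [HxC|HxC].
  { destruct (nf_mulC c u x) as (c' & u' & ? & ? & ? & ?); auto.
    exists c', u'. repeat split; auto. lia. }
  assert (Hix : letter (i, x)) by now split.
  destruct u as [|[j y] u _] using rev_ind.
  { exists one, [(i, c * x)]. split; [apply C1|]. split; [now apply alt1, letter_mulC_l|].
    split; [simpl; lia|]. rewrite wprod1, wprod_nil. simpl. now group_simpl. }
  pose proof Hu as (Hu0 & Hu0j & Hjy)%alt_snoc.
  destruct (classic (i = j)) as [<-|Hij].
  - destruct (classic (C (y * x))) as [Hyx|Hyx].
    + destruct (nf_mulC c u (y * x)) as (c' & u' & ? & ? & Hl & E); auto.
      exists c', u'. split; [auto|]. split; [auto|]. rewrite length_app, Hl.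
      split; [simpl; lia|]. rewrite <- E, wprod_app, wprod1. simpl. now group_simpl.
    + exists c, (u ++ [(i, y * x)]). split; [auto|]. split.
      * apply alt_snoc. split; [auto|]. split; [auto|].
        split; [apply GM; [apply Hjy | auto] | auto].
      * rewrite !length_app. split; [simpl; lia|].
        rewrite !wprod_app, !wprod1. simpl. now group_simpl.
  - exists c, ((u ++ [(j, y)]) ++ [(i, x)]). split; [auto|]. split.
    + apply alt_snoc. split; [auto|]. split; [apply last_not_snoc; auto | auto].
    + rewrite !length_app. split; [simpl; lia|].
      rewrite !wprod_app, !wprod1. simpl. now group_simpl.
Qed.

Lemma nf_exists ws : (forall w, In w ws -> Gi (fst w) (snd w)) ->
  exists c u, C c /\ alt u /\ length u <= length ws /\ wprod ws = c * wprod u.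
Proof.
  induction ws as [|[i x] ws IH] using rev_ind; intro Hws.
  - exists one, []. split; [apply C1|]. split; [constructor|].
    split; [auto|]. rewrite wprod_nil. now group_simpl.
  - destruct IH as (c & u & Hc & Hu & Hl & E).
    { intros w Hw. apply Hws, in_or_app. now left. }
    destruct (nf_mul_elem c u i x) as (c' & u' & ? & ? & ? & E'); auto.
    { apply (Hws (i, x)), in_or_app. right. now left. }
    exists c', u'. split; [auto|]. split; [auto|]. rewrite length_app. split; [simpl; lia|].
    rewrite wprod_app, wprod1, E. exact E'.
Qed.

(* Maximal cancellation in [u c v]: afterwards one of the remaining words is empty,
   or their letters at the junction do not combine into an element of [C]. *)
Lemma alt_cancel v : forall u c, alt u -> alt v -> C c ->
  exists u1 u2 v1 v2, u = u1 ++ u2 /\ v = v1 ++ v2 /\ length u2 = length v1 /\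
    C (wprod u2 * c * wprod v1) /\
    (u1 = [] \/ v2 = [] \/
     exists u1' a b v2', u1 = u1' ++ [a] /\ v2 = b :: v2' /\
       (fst a <> fst b \/ ~ C (snd a * (wprod u2 * c * wprod v1) * snd b))).
Proof.
  induction v as [|b v IH]; intros u c Hu Hv Hc.
  { exists u, [], [], []. rewrite app_nil_r. split; [auto|]. split; [auto|].
    split; [auto|]. rewrite wprod_nil. group_simpl. auto. }
  destruct u as [|a u _] using rev_ind.
  { exists [], [], [], (b :: v). split; [auto|]. split; [auto|].
    split; [auto|]. rewrite wprod_nil. group_simpl. auto. }
  destruct (classic (fst a = fst b /\ C (snd a * c * snd b))) as [[Hab Habc]|Hn].
  - apply alt_snoc in Hu. apply alt_cons in Hv.
    destruct (IH u (snd a * c * snd b)) as (u1 & u2 & v1 & v2 & -> & -> & El & HC & Hd);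
      try tauto.
    exists u1, (u2 ++ [a]), (b :: v1), v2. rewrite <- app_assoc, !length_app. simpl.
    split; [auto|]. split; [auto|]. split; [lia|].
    replace (wprod (u2 ++ [a]) * c * wprod (b :: v1))
      with (wprod u2 * (snd a * c * snd b) * wprod v1)
      by (rewrite wprod_app, wprod1, wprod_cons; now group_simpl).
    auto.
  - exists (u ++ [a]), [], [], (b :: v). rewrite app_nil_r. split; [auto|]. split; [auto|].
    split; [auto|]. rewrite wprod_nil. group_simpl. split; [auto|].
    right; right. exists u, a, b, v. split; [auto|]. split; [auto|].
    destruct (classic (fst a = fst b)); [right | now left].
    intro Hm. apply Hn. split; [auto|]. revert Hm. now group_simpl.
Qed.

Lemma nf_length_unique c1 c2 u1 u2 : C c1 -> C c2 -> alt u1 -> alt u2 ->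
  c1 * wprod u1 = c2 * wprod u2 -> length u1 = length u2.
Proof.
  intros Hc1 Hc2 Hu1 Hu2 E.
  destruct (alt_cancel u1 (winv u2) (inv c2 * c1)) as
    (a1 & a2 & b1 & b2 & Ea & Eb & El & HC & Hd); auto using alt_winv, CM, CV.
  set (c := wprod a2 * (inv c2 * c1) * wprod b1) in *.
  assert (E1 : wprod a1 * c * wprod b2 = one).
  { transitivity (wprod (winv u2) * (inv c2 * c1) * wprod u1).
    - rewrite Ea, Eb, !wprod_app. unfold c. now group_simpl.
    - rewrite wprod_winv.
      transitivity (inv (c2 * wprod u2) * (c1 * wprod u1)); [now group_simpl|].
      rewrite E. apply gmulV. }
  assert (Ha1 : alt a1) by (apply (alt_app a1 a2); rewrite <- Ea; now apply alt_winv).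
  assert (Hb2 : alt b2) by (apply (alt_app b1 b2); now rewrite <- Eb).
  destruct Hd as [->|[->|(a1' & a & b & b2' & -> & -> & Hab)]].
  - destruct b2 as [|b b2].
    + rewrite <- (length_winv u2), Ea, Eb, !length_app, El. simpl. lia.
    + exfalso. apply (nf_neq1 c (b :: b2)); auto; [discriminate|].
      rewrite <- E1, wprod_nil. now group_simpl.
  - destruct a1 as [|a a1].
    + rewrite <- (length_winv u2), Ea, Eb, !length_app, El. simpl. lia.
    + exfalso. destruct (nf_mulC one (a :: a1) c) as (c' & w & Hc' & Hw & Lw & Ew);
        auto using C1.
      apply (nf_neq1 c' w); auto; [intros ->; simpl in Lw; discriminate|].
      rewrite <- Ew, gmul1. rewrite wprod_nil, mulg1 in E1. exact E1.
  - exfalso. destruct (classic (fst a = fst b)) as [Eab|Nab].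
    + assert (Hm : ~ C (snd a * c * snd b)) by (destruct Hab; tauto).
      apply (nf_neq1 one (a1' ++ (fst a, snd a * c * snd b) :: b2')); auto using C1.
      * apply alt_join_merge; auto.
      * now destruct a1'.
      * rewrite gmul1, <- E1, !wprod_app, !wprod_cons, ?wprod_nil. simpl. now group_simpl.
    + apply (nf_neq1 one (a1' ++ (fst a, snd a * c) :: b :: b2')); auto using C1.
      * apply alt_join_distinct; auto. apply alt_cons in Hb2. apply head_not_cons. congruence.
      * now destruct a1'.
      * rewrite gmul1, <- E1, !wprod_app, !wprod_cons, ?wprod_nil. simpl. now group_simpl.
Qed.

Lemma len_nf c u : C c -> alt u -> len (c * wprod u) = length u.
Proof.
  intros Hc Hu. unfold Defs.len.
  assert (Hex : exists m, has_length G Gi C (c * wprod u) m) by (exists (length u), c, u; auto).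
  destruct (epsilon_spec (inhabits 0) _ Hex) as (c' & u' & Hc' & Hu' & <- & E).
  symmetry. now apply (nf_length_unique c c').
Qed.

Lemma len_wprod u : alt u -> len (wprod u) = length u.
Proof. intro Hu. rewrite <- (gmul1 G (wprod u)). apply len_nf; auto using C1. Qed.

Lemma len_nf_mulC c u z : C c -> alt u -> C z -> len (c * wprod u * z) = length u.
Proof.
  intros Hc Hu Hz. destruct (nf_mulC c u z) as (c' & u' & ? & ? & <- & ->); auto.
  now apply len_nf.
Qed.

Lemma nf_of g : exists c u, C c /\ alt u /\ g = c * wprod u.
Proof.
  destruct AFP as (_ & _ & _ & Hgen & _). destruct (Hgen g) as (ws & Hws & ->).
  destruct (nf_exists ws Hws) as (c & u & ? & ? & _ & E). now exists c, u.
Qed.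

Lemma len_wprod_le ws : (forall w, In w ws -> Gi (fst w) (snd w)) -> len (wprod ws) <= length ws.
Proof.
  intro Hws. destruct (nf_exists ws Hws) as (c & u & ? & ? & ? & ->). now rewrite len_nf.
Qed.

Lemma len_inv x : len (inv x) = len x.
Proof.
  destruct (nf_of x) as (c & u & Hc & Hu & ->).
  destruct (nf_mulC one (winv u) (inv c)) as (c' & u' & Hc' & Hu' & Hl & E);
    auto using C1, CV, alt_winv.
  replace (inv (c * wprod u)) with (c' * wprod u')
    by (rewrite <- E, wprod_winv; now group_simpl).
  rewrite !len_nf, Hl; auto. apply length_winv.
Qed.

Lemma len_C x : C x -> len x = 0.
Proof.
  intro Hx. rewrite <- (mulg1 x). change one with (wprod []). now apply len_nf.
Qed.

Lemma len1_letter x : len x = 1 -> exists j, letter (j, x).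
Proof.
  destruct (nf_of x) as (c & u & Hc & Hu & ->). rewrite len_nf; auto.
  destruct u as [|a [|? ?]]; try discriminate. intros _. exists (fst a).
  rewrite wprod1. apply letter_mulC_l; auto. apply alt1 in Hu. now destruct a.
Qed.

Lemma len_factor_le1 j x : Gi j x -> len x <= 1.
Proof.
  intro Hx. change x with (snd (j, x)). rewrite <- wprod1.
  apply len_wprod_le. now intros w [<-|[]].
Qed.

Lemma reduced2 x y : reduced G Gi C [x; y] <-> len (x * y) = len x + len y.
Proof.
  unfold reduced. cbn [fold_right]. rewrite !gprod_cons. change (gprod G []) with one.
  rewrite mulg1, Nat.add_0_r. reflexivity.
Qed.

Lemma right_factor_nf c u v : C c -> alt (u ++ v) ->
  right_factor G Gi C (wprod v) (c * wprod (u ++ v)).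
Proof.
  intros Hc Huv. pose proof (alt_app u v Huv) as [Hu Hv]. exists (c * wprod u).
  rewrite wprod_app, gmulA. split; [auto|]. apply reduced2.
  rewrite <- gmulA, <- wprod_app, !len_nf, len_wprod, length_app; auto.
Qed.

Lemma left_factor_nf c u v : C c -> alt (u ++ v) ->
  left_factor G Gi C (wprod u) (wprod (u ++ v) * c).
Proof.
  intros Hc Huv. pose proof (alt_app u v Huv) as [Hu Hv]. exists (wprod v * c).
  rewrite wprod_app, gmulA. split; [auto|]. apply reduced2.
  rewrite gmulA, <- wprod_app, <- (gmul1 G (wprod (u ++ v))), <- (gmul1 G (wprod v)).
  rewrite !len_nf_mulC, len_wprod, length_app; auto using C1.
Qed.

(* If the first letter of [g] lay in the factor of [t], it would merge with [t] in
   [g^-1 t g], which then could not have length [2 l(g) + 1]. *)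
Lemma reduced_conj_head_not t j c Z : Gi j t -> len t = 1 -> C c -> alt Z ->
  reduced G Gi C [inv (c * wprod Z); t; c * wprod Z] -> head_not Z j.
Proof.
  intros Ht Hl Hc HZ Hr [i x] Z' -> Eij. simpl in Eij. subst i.
  unfold reduced in Hr. cbn [fold_right] in Hr. rewrite !gprod_cons in Hr.
  change (gprod G []) with one in Hr. rewrite mulg1, len_inv, Hl, len_nf in Hr; auto.
  apply alt_cons in HZ as ([Hx _] & _ & HZ').
  set (w := winv Z' ++ (j, inv x * inv c * t * c * x) :: Z').
  assert (Hw : len (wprod w) <= length w).
  { apply len_wprod_le. intros a Ha. apply in_app_or in Ha as [Ha|[<-|Ha]].
    - apply (alt_letter (winv Z')); auto using alt_winv.
    - simpl. repeat apply GM; auto using GV, CG, CV.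
    - now apply (alt_letter Z'). }
  replace (wprod w) with (inv (c * wprod ((j, x) :: Z')) * (t * (c * wprod ((j, x) :: Z'))))
    in Hw by (unfold w; rewrite wprod_app, !wprod_cons, wprod_winv; simpl; now group_simpl).
  unfold w in Hw. rewrite Hr, length_app, length_winv in Hw. simpl in Hw. lia.
Qed.

Section Tamed.
Variables (n : nat) (t g : nat -> G).
Hypothesis Htamed : tamed G Gi C n t g.

(* The letter [y] standing for [t_k] in the partial product: [t_k] itself up to [C],
   or [R g_k^-1 t_k] for a right factor [R] of [g_(k-1)] that survived cancellation. *)
Definition residue k y : Prop :=
  (exists r, C r /\ y = r * t k) \/
  (exists R, right_factor G Gi C R (ext G n g (k - 1)) /\ y = R * inv (g k) * t k).

Definition partial_nf k : Prop := exists cQ Q j y Z cz,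
  C cQ /\ C cz /\ alt (Q ++ (j, y) :: Z) /\
  conj_prod G k t g = cQ * wprod (Q ++ (j, y) :: Z) /\
  g k = cz * wprod Z /\ Gi j (t k) /\ len (g 1) + k <= length Q + 1 /\
  residue k (y * inv cz).

Lemma partial_nf_1 : 1 <= n -> partial_nf 1.
Proof.
  intro Hn. destruct Htamed as [Ht _]. destruct (Ht 1) as [Hl Hr]; [lia|].
  destruct (len1_letter _ Hl) as (j & Hj).
  destruct (nf_of (g 1)) as (c & Z & Hc & HZ & Eg).
  rewrite Eg in Hr. pose proof (reduced_conj_head_not _ _ _ _ (proj1 Hj) Hl Hc HZ Hr) as HZj.
  exists one, (winv Z), j, (inv c * t 1 * c), Z, c.
  split; [apply C1|]. split; [auto|]. split; [|split; [|split; [auto|split; [apply Hj|split]]]].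
  - apply alt_cat_cons. split; [now apply alt_winv|]. split; [now apply last_not_winv|].
    split; [now apply letter_conjC | auto].
  - change 1 with (S 0). rewrite conj_prod_S, Eg, wprod_app, wprod_cons, wprod_winv.
    unfold gconj. change (conj_prod G 0 t g) with one. simpl. now group_simpl.
  - rewrite Eg, len_nf, length_winv; auto.
  - left. exists (inv c). split; [now apply CV | now group_simpl].
Qed.

Lemma residue_cancellable k y L : 1 <= k -> S k <= n -> residue k y ->
  left_factor G Gi C L (inv (g (S k))) -> C (y * g k * L) -> cancellable G Gi C n t g k.
Proof.
  intros Hk Hkn Hres HL HyL. unfold cancellable; cbv zeta.
  rewrite (ext_in n g k), (ext_in n t k), (ext_in n g (k + 1)), Nat.add_1_r by lia. right.
  destruct Hres as [(r & Hr & ->) | (R & HR & ->)].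
  - left. exists L. split; [auto|].
    replace (t k * g k * L) with (inv r * (r * t k * g k * L)) by now group_simpl.
    apply CM; auto using CV.
  - right. exists R, L. auto.
Qed.

(* [Z1 ++ Z2] is the normal word of [g_k] and [V1 ++ V2] the inverted one of
   [g_(k+1)]; the part [Z2 V1] cancels into [c]. *)
Section Step.
Variables (k : nat) (cQ cz cw c : G) (Q Z1 Z2 V1 V2 W : word) (j jt : I) (y : G).
Hypotheses (Hk : 1 <= k) (Hkn : S k <= n).
Hypotheses (HcQ : C cQ) (Hcz : C cz) (Hcw : C cw) (Hc : C c).
Hypothesis HQ : alt (Q ++ (j, y) :: Z1 ++ Z2).
Hypothesis EP : conj_prod G k t g = cQ * wprod (Q ++ (j, y) :: Z1 ++ Z2).
Hypothesis Eg : g k = cz * wprod (Z1 ++ Z2).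
Hypothesis Hj : Gi j (t k).
Hypothesis HL : len (g 1) + k <= length Q + 1.
Hypothesis Hres : residue k (y * inv cz).
Hypothesis HW : alt W.
Hypothesis Eg' : g (S k) = cw * wprod W.
Hypothesis Hjt : letter (jt, t (S k)).
Hypothesis HWjt : head_not W jt.
Hypothesis EV : winv W = V1 ++ V2.
Hypothesis Ec : c = wprod Z2 * wprod V1.

Local Notation t' := (inv cw * t (S k) * cw).

Lemma step_inv_gS : inv (g (S k)) = wprod V1 * wprod V2 * inv cw.
Proof. rewrite Eg', invMg, <- wprod_winv, EV, wprod_app. reflexivity. Qed.

Lemma step_product :
  conj_prod G (S k) t g = cQ * wprod (Q ++ (j, y) :: Z1) * c * wprod (V2 ++ (jt, t') :: W).
Proof.
  rewrite conj_prod_S, EP. unfold gconj. rewrite step_inv_gS, Eg', Ec.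
  wprod_simpl. now group_simpl.
Qed.

Lemma step_head_alt : alt (Q ++ (j, y) :: Z1).
Proof. apply (alt_app _ Z2). now rewrite <- app_assoc. Qed.

Lemma step_Z_alt : alt (Z1 ++ Z2).
Proof. apply alt_cat_cons in HQ. tauto. Qed.

Lemma step_tail_alt : alt (V2 ++ (jt, t') :: W).
Proof.
  pose proof (alt_winv W HW) as HV. rewrite EV in HV. apply alt_cat_cons.
  split; [exact (proj2 (alt_app V1 V2 HV))|]. split.
  - apply (last_not_suffix V1). rewrite <- EV. now apply last_not_winv.
  - split; [now apply letter_conjC | auto].
Qed.

Lemma step_keep Q' : alt (Q' ++ (jt, t') :: W) -> length Q < length Q' ->
  conj_prod G (S k) t g = cQ * wprod (Q' ++ (jt, t') :: W) -> partial_nf (S k).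
Proof.
  intros HQ' Hl EP'. exists cQ, Q', jt, t', W, cw.
  repeat split; auto; [apply Hjt | lia |].
  left. exists (inv cw). split; [now apply CV | now group_simpl].
Qed.

Lemma step_distinct A a : Q ++ (j, y) :: Z1 = A ++ [a] ->
  head_not (V2 ++ (jt, t') :: W) (fst a) -> partial_nf (S k).
Proof.
  intros EA Ha. apply (step_keep (A ++ (fst a, snd a * c) :: V2)).
  - rewrite <- app_assoc. apply alt_join_distinct; auto using step_tail_alt.
    rewrite <- EA. apply step_head_alt.
  - apply (f_equal (@length _)) in EA. rewrite !length_app in *. simpl in *. lia.
  - rewrite step_product, EA. wprod_simpl. now group_simpl.
Qed.

Lemma step_merge A a b V2' : Q ++ (j, y) :: Z1 = A ++ [a] -> V2 = b :: V2' ->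
  fst b = fst a -> ~ C (snd a * c * snd b) -> partial_nf (S k).
Proof.
  intros EA EV2 Hab Hm. apply (step_keep (A ++ (fst a, snd a * c * snd b) :: V2')).
  - rewrite <- app_assoc. apply alt_join_merge; auto.
    + rewrite <- EA. apply step_head_alt.
    + rewrite app_comm_cons, <- EV2. apply step_tail_alt.
  - apply (f_equal (@length _)) in EA. rewrite !length_app in *. simpl in *. lia.
  - rewrite step_product, EA, EV2. wprod_simpl. now group_simpl.
Qed.

(* The cancellation never reaches the letter of [t_k]: otherwise [t_k] would be
   cancellable by a left factor of [g_(k+1)^-1]. *)
Lemma step_no_cancel_k b V2' : Z1 = [] -> V2 = b :: V2' -> ~ C (y * c * snd b).
Proof.
  intros EZ1 EV2 Hm. destruct Htamed as (_ & _ & Hnc). apply (Hnc k); [lia|].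
  apply (residue_cancellable k (y * inv cz) (wprod (V1 ++ [b]))); auto.
  - replace (inv (g (S k))) with (wprod ((V1 ++ [b]) ++ V2') * inv cw)
      by (rewrite step_inv_gS, EV2; wprod_simpl; now group_simpl).
    apply left_factor_nf; [now apply CV|].
    rewrite <- app_assoc. cbn [app]. rewrite <- EV2, <- EV. now apply alt_winv.
  - replace (y * inv cz * g k * wprod (V1 ++ [b])) with (y * c * snd b); [exact Hm|].
    rewrite Eg, EZ1, Ec. wprod_simpl. now group_simpl.
Qed.

Lemma step_labels_neq : Z1 = [] -> V2 = [] -> j <> jt.
Proof.
  intros EZ1 EV2 Ejj. destruct Htamed as (_ & Hlen2 & _).
  assert (H2 : len (t k * t (k + 1)) = 2).
  { apply Hlen2; [lia|]. apply len_C.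
    replace (g k * inv (g (k + 1))) with (cz * c * inv cw); [apply CM; auto using CM, CV|].
    rewrite Nat.add_1_r, step_inv_gS, Eg, EZ1, EV2, Ec. wprod_simpl. now group_simpl. }
  assert (Hjt' : Gi j (t (S k))) by (rewrite Ejj; apply Hjt).
  pose proof (len_factor_le1 j _ (GM j _ _ Hj Hjt')). rewrite Nat.add_1_r in H2. lia.
Qed.

Lemma step_Z1_nil : Z1 = [] -> partial_nf (S k).
Proof.
  intro EZ1. assert (EA : Q ++ (j, y) :: Z1 = Q ++ [(j, y)]) by now rewrite EZ1.
  destruct (destruct_list V2) as [(b & V2' & EV2) | EV2].
  - destruct (classic (fst b = j)) as [Ebj|Nbj].
    + apply (step_merge Q (j, y) b V2' EA); auto. now apply (step_no_cancel_k b V2').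
    + apply (step_distinct Q (j, y) EA). rewrite EV2. now apply head_not_cons.
  - apply (step_distinct Q (j, y) EA). rewrite EV2. apply head_not_cons. simpl.
    intro E. now apply step_labels_neq.
Qed.

Lemma step_last_factor Z1' x : Z1 = Z1' ++ [(jt, x)] -> V2 = [] ->
  right_factor G Gi C (wprod ((jt, x) :: Z2)) (ext G n g (S k - 1)) /\
  wprod ((jt, x) :: Z2) * inv (g (S k)) * t (S k) = x * c * t' * inv cw.
Proof.
  intros EZ1 EV2. split.
  - replace (S k - 1) with k by lia. rewrite ext_in, Eg by lia.
    replace (Z1 ++ Z2) with (Z1' ++ (jt, x) :: Z2) by now rewrite EZ1, <- app_assoc.
    apply right_factor_nf; [auto|].
    pose proof step_Z_alt as HZ. now rewrite EZ1, <- app_assoc in HZ.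
  - rewrite step_inv_gS, EV2, Ec. wprod_simpl. now group_simpl.
Qed.

(* When the letter of [t_(k+1)] meets a letter of [g_k] of the same factor, they
   merge; the product is not in [C], else [t_(k+1)] would be cancellable by a right
   factor of [g_k]. *)
Lemma step_merge_last Z1' x : Z1 = Z1' ++ [(jt, x)] -> V2 = [] -> partial_nf (S k).
Proof.
  intros EZ1 EV2. destruct (step_last_factor Z1' x EZ1 EV2) as [HR ER].
  assert (Hm : ~ C (x * c * t')).
  { intro Hm. destruct Htamed as (_ & _ & Hnc). apply (Hnc (S k)); [lia|].
    unfold cancellable; cbv zeta. rewrite (ext_in n g (S k)), (ext_in n t (S k)) by lia.
    left. exists (wprod ((jt, x) :: Z2)). split; [exact HR|].
    rewrite ER. apply CM; auto using CV. }
  exists cQ, (Q ++ (j, y) :: Z1'), jt, (x * c * t'), W, cw.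
  split; [auto|]. split; [auto|]. split; [|split; [|split; [auto|split; [apply Hjt|split]]]].
  - apply (alt_join_merge _ (jt, x) (jt, t')); auto.
    + rewrite <- app_assoc. cbn [app]. rewrite <- EZ1. apply step_head_alt.
    + pose proof step_tail_alt as HT. now rewrite EV2 in HT.
  - rewrite step_product, EZ1, EV2. wprod_simpl. now group_simpl.
  - rewrite length_app. simpl. lia.
  - right. exists (wprod ((jt, x) :: Z2)). split; [exact HR|]. rewrite ER. now group_simpl.
Qed.

Lemma step_V2_nil Z1' a : Z1 = Z1' ++ [a] -> V2 = [] -> partial_nf (S k).
Proof.
  intros EZ1 EV2. destruct a as [i x]. destruct (classic (i = jt)) as [->|Nij].
  - now apply (step_merge_last Z1' x).
  - apply (step_distinct (Q ++ (j, y) :: Z1') (i, x)).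
    + now rewrite EZ1, <- app_assoc.
    + rewrite EV2. apply head_not_cons. simpl. congruence.
Qed.

Lemma step_partial_nf :
  Z1 = [] \/ V2 = [] \/
  (exists Z1' a b V2', Z1 = Z1' ++ [a] /\ V2 = b :: V2' /\
     (fst a <> fst b \/ ~ C (snd a * c * snd b))) ->
  partial_nf (S k).
Proof.
  intros [EZ1 | [EV2 | (Z1' & a & b & V2' & EZ1 & EV2 & Hab)]].
  - now apply step_Z1_nil.
  - destruct (classic (Z1 = [])) as [EZ1|NZ1]; [now apply step_Z1_nil|].
    destruct (exists_last NZ1) as (Z1' & a & EZ1). now apply (step_V2_nil Z1' a).
  - assert (EA : Q ++ (j, y) :: Z1 = (Q ++ (j, y) :: Z1') ++ [a])
      by now rewrite EZ1, <- app_assoc.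
    destruct (classic (fst b = fst a)) as [Eab|Nab].
    + apply (step_merge _ a b V2' EA EV2 Eab). destruct Hab; [congruence | auto].
    + apply (step_distinct _ a EA). rewrite EV2. apply head_not_cons. congruence.
Qed.

End Step.

Lemma partial_nf_S k : 1 <= k -> S k <= n -> partial_nf k -> partial_nf (S k).
Proof.
  intros Hk Hkn (cQ & Q & j & y & Z & cz & HcQ & Hcz & HQ & EP & Eg & Hj & HL & Hres).
  destruct Htamed as [Ht _]. destruct (Ht (S k)) as [Hl Hr]; [lia|].
  destruct (len1_letter _ Hl) as (jt & Hjt).
  destruct (nf_of (g (S k))) as (cw & W & Hcw & HW & Eg').
  rewrite Eg' in Hr. pose proof (reduced_conj_head_not _ _ _ _ (proj1 Hjt) Hl Hcw HW Hr).
  assert (HZ : alt Z) by (apply alt_cat_cons in HQ; tauto).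
  destruct (alt_cancel (winv W) Z one) as (Z1 & Z2 & V1 & V2 & -> & EV & _ & Hc & Hd);
    auto using alt_winv, C1.
  rewrite mulg1 in Hc, Hd.
  now apply (step_partial_nf k cQ cz cw (wprod Z2 * wprod V1) Q Z1 Z2 V1 V2 W j jt y).
Qed.

Lemma partial_nf_upto k : 1 <= k <= n -> partial_nf k.
Proof.
  induction k as [|k IH]; intro Hk; [lia|].
  destruct (Nat.eq_dec k 0) as [->|Hk0]; [apply partial_nf_1; lia|].
  apply partial_nf_S; [lia | lia | apply IH; lia].
Qed.

End Tamed.
End Words.

Theorem mainTheorem18 (G : Grp) (I : Type) (Gi : I -> G -> Prop) (C : G -> Prop)
  (n : nat) (t g : nat -> G) :
  is_amalgamated_free_product G Gi C ->
  1 <= n ->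
  tamed G Gi C n t g ->
  len G Gi C (conj_prod G n t g) >= len G Gi C (g 1) + n + len G Gi C (g n).
Proof.
  intros AFP Hn Ht.
  destruct (partial_nf_upto G I Gi C AFP n t g Ht n) as
    (cQ & Q & j & y & Z & cz & HcQ & Hcz & HQ & -> & -> & _ & HL & _); [lia|].
  assert (HZ : alternating G Gi C Z) by (apply alt_cat_cons in HQ; tauto).
  rewrite !len_nf, length_app by assumption. simpl. lia.
Qed.
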